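(* Consider real variables $a_i,b_i,c_i,d_i$, $i=1,\dots,6$, subject to the linear relations \[c_1+b_1=c_2+b_2=c_3+b_3,\qquad -a_1+d_1=-a_2+d_2=-a_3+d_3,\] \[(a_{j+3},b_{j+3},c_{j+3},d_{j+3})=(-b_j,a_j,-d_j,c_j)\quad(j=1,2,3).\] For a constant $C$ let $P_i^{C}\coloneqq b_ic_i-a_id_i+C(a_i^2+c_i^2)$ and, for parameters $x,y,w$, let $P_{(x,y,w)}\coloneqq x(P_1^C+P_4^C)+y(P_2^C+P_5^C)+w(P_3^C+P_6^C)$. Define the complex-valued linear function \[Y_{(x,y,w)}\coloneqq(c_1+b_1)+x(-c_1+b_1)+y(-c_2+b_2)+w(-c_3+b_3)+i\big((-a_1+d_1)+x(-a_1-d_1)+y(-a_2-d_2)+w(-a_3-d_3)\big).\] Let $\alpha,\beta,\gamma\ge0$ with $\alpha+\beta+\gamma<1$, and for $0\le\lambda\le1$ let $K_\lambda\coloneqq\ker(Y_{(\lambda\alpha,\lambda\beta,\lambda\gamma)})$ (both real and imaginary parts vanish), a subspace of the space of variables satisfying the relations above. Then: (1) If $\alpha,\beta,\gamma>0$ and $0<C<1-(\alpha+\beta+\gamma)$, then $P_{(\alpha,\beta,\gamma)}$ is negative definite on $K_\lambda$ for all $0\le\lambda\le1$. (2) If $\alpha,\beta>0$, $\gamma=0$, and $C,\gamma'>0$ satisfy $0<C<1-(\alpha+\beta+\gamma')$, then $P_{(\alpha,\beta,\gamma')}$ is negative definite on $K_\lambda$ for all $0\le\lambda\le1$. (3) If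 $\alpha>0$, $\beta=\gamma=0$, and $C,\beta',\gamma'>0$ satisfy $0<C<1-(\alpha+\beta'+\gamma')$, then $P_{(\alpha,\beta',\gamma')}$ is negative definite on $K_\lambda$ for all $0\le\lambda\le1$. *)

From HB Require Import structures.
From mathcomp Require Import all_boot all_order all_algebra.
From mathcomp Require Import reals.
Set Implicit Arguments. Unset Strict Implicit. Unset Printing Implicit Defensive.
Import Order.TTheory GRing.Theory Num.Theory.
Local Open Scope ring_scope.

Section Defs.
Variable R : realType.

(* Variables a_i, b_i, c_i, d_i are given as functions nat -> R; only the
   indices i = 1..6 are meaningful (other values are ignored). *)

Definition relations (a b c d : nat -> R) : Prop :=
  [/\ c 1%N + b 1%N = c 2%N + b 2%N,
      c 2%N + b 2%N = c 3%N + b 3%N,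
      - a 1%N + d 1%N = - a 2%N + d 2%N,
      - a 2%N + d 2%N = - a 3%N + d 3%N &
      forall j : nat, (1 <= j <= 3)%N ->
        [/\ a (j + 3)%N = - b j, b (j + 3)%N = a j,
            c (j + 3)%N = - d j & d (j + 3)%N = c j]].

Definition Pi (C : R) (a b c d : nat -> R) (i : nat) : R :=
  b i * c i - a i * d i + C * (a i ^+ 2 + c i ^+ 2).

Definition Pxyw (C x y w : R) (a b c d : nat -> R) : R :=
  x * (Pi C a b c d 1 + Pi C a b c d 4)
  + y * (Pi C a b c d 2 + Pi C a b c d 5)
  + w * (Pi C a b c d 3 + Pi C a b c d 6).

Definition Yre (x y w : R) (a b c d : nat -> R) : R :=
  (c 1%N + b 1%N) + x * (- c 1%N + b 1%N) + y * (- c 2%N + b 2%N)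
  + w * (- c 3%N + b 3%N).

Definition Yim (x y w : R) (a b c d : nat -> R) : R :=
  (- a 1%N + d 1%N) + x * (- a 1%N - d 1%N) + y * (- a 2%N - d 2%N)
  + w * (- a 3%N - d 3%N).

Definition inK (x y w : R) (a b c d : nat -> R) : Prop :=
  relations a b c d /\ Yre x y w a b c d = 0 /\ Yim x y w a b c d = 0.

Definition nonzero_vars (a b c d : nat -> R) : Prop :=
  exists i : nat, (1 <= i <= 6)%N /\
    (a i != 0 \/ b i != 0 \/ c i != 0 \/ d i != 0).

Definition negdef_on_K (C x' y' w' x y w : R) : Prop :=
  forall a b c d : nat -> R, inK x y w a b c d -> nonzero_vars a b c d ->
    Pxyw C x' y' w' a b c d < 0.

End Defs.

From HB Require Import structures.
From mathcomp Require Import all_boot all_order all_algebra.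
From mathcomp Require Import reals ring lra.
Set Implicit Arguments. Unset Strict Implicit. Unset Printing Implicit Defensive.
Import Order.TTheory GRing.Theory Num.Theory.
Local Open Scope ring_scope.

(* Write Y_(x,y,w) = s + x p_1 + y p_2 + w p_3 + i (t + x q_1 + y q_2 + w q_3)
   with s = [Yre0], p_j = [Yre_coef j], t = [Yim0], q_j = [Yim_coef j].  The
   relations give s = c_j + b_j and t = d_j - a_j for every j, and make
   P_j + P_(j+3) a function of s, t, p_j, q_j alone, whence
     2 P_(w) = (1 + C) W (s^2 + t^2) - (1 - C) Q,
   W = w_1 + w_2 + w_3,  Q = sum_j w_j (p_j^2 + q_j^2).
   On the kernel of Y_(e) with 0 <= e_j <= w_j we have s = - sum_j e_j p_j and
   t = - sum_j e_j q_j, so Cauchy-Schwarz gives s^2 + t^2 <= W Q and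
   2 P_(w) <= ((1 + C) W^2 - (1 - C)) Q.  The bracket is negative once
   C < 1 - W, and Q > 0 because p = q = 0 forces s = t = 0 on the kernel, and
   then the relations force the whole vector to vanish. *)

Section RealInequalities.
Variable R : realDomainType.

Lemma cauchy_schwarz3 (e1 e2 e3 x1 x2 x3 : R) : 0 <= e1 -> 0 <= e2 -> 0 <= e3 ->
  (e1 * x1 + e2 * x2 + e3 * x3) ^+ 2
    <= (e1 + e2 + e3) * (e1 * x1 ^+ 2 + e2 * x2 ^+ 2 + e3 * x3 ^+ 2).
Proof.
move=> e1_ge0 e2_ge0 e3_ge0; rewrite -subr_ge0.
have -> : (e1 + e2 + e3) * (e1 * x1 ^+ 2 + e2 * x2 ^+ 2 + e3 * x3 ^+ 2)
          - (e1 * x1 + e2 * x2 + e3 * x3) ^+ 2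
  = e1 * e2 * (x1 - x2) ^+ 2 + e1 * e3 * (x1 - x3) ^+ 2
    + e2 * e3 * (x2 - x3) ^+ 2 by ring.
by rewrite !addr_ge0 // mulr_ge0 ?sqr_ge0 // mulr_ge0.
Qed.

Lemma sqr_wsum3_le (e1 e2 e3 w1 w2 w3 x1 x2 x3 : R) :
  0 <= e1 <= w1 -> 0 <= e2 <= w2 -> 0 <= e3 <= w3 ->
  (e1 * x1 + e2 * x2 + e3 * x3) ^+ 2
    <= (w1 + w2 + w3) * (w1 * x1 ^+ 2 + w2 * x2 ^+ 2 + w3 * x3 ^+ 2).
Proof.
move=> /andP[e1_ge0 e1w] /andP[e2_ge0 e2w] /andP[e3_ge0 e3w].
apply: (le_trans (cauchy_schwarz3 x1 x2 x3 e1_ge0 e2_ge0 e3_ge0)).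
have := sqr_ge0 x1; have := sqr_ge0 x2; have := sqr_ge0 x3 => x3sq x2sq x1sq.
by apply: ler_pM; rewrite ?lerD ?ler_wpM2r // !addr_ge0 // mulr_ge0.
Qed.

Lemma wsum3_eq0 (w1 w2 w3 x1 x2 x3 : R) :
  0 < w1 -> 0 < w2 -> 0 < w3 -> 0 <= x1 -> 0 <= x2 -> 0 <= x3 ->
  w1 * x1 + w2 * x2 + w3 * x3 = 0 -> [/\ x1 = 0, x2 = 0 & x3 = 0].
Proof.
move=> w1_gt0 w2_gt0 w3_gt0 x1_ge0 x2_ge0 x3_ge0 /eqP.
have [w1_ge0 w2_ge0 w3_ge0] := And3 (ltW w1_gt0) (ltW w2_gt0) (ltW w3_gt0).
rewrite !paddr_eq0 ?addr_ge0 ?mulr_ge0 //.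
by rewrite !mulf_eq0 !(gt_eqF w1_gt0, gt_eqF w2_gt0, gt_eqF w3_gt0) /=
  => /andP[/andP[/eqP-> /eqP->] /eqP->].
Qed.

Lemma one_add_mul_sqr_lt_one_sub (C W : R) : 0 < C -> 0 < W -> C < 1 - W ->
  (1 + C) * W ^+ 2 < 1 - C.
Proof.
move=> C_gt0 W_gt0 CW; rewrite -subr_gt0.
have -> : 1 - C - (1 + C) * W ^+ 2
  = (1 + C) * (1 - C - W) * (1 - C + W) + (1 - C) * C ^+ 2 by ring.
have : 0 < (1 + C) * (1 - C - W) * (1 - C + W) by rewrite !mulr_gt0 //; lra.
have : 0 <= (1 - C) * C ^+ 2 by rewrite mulr_ge0 ?sqr_ge0 //; lra.
lra.
Qed.

End RealInequalities.

Section Coordinates.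
Variable R : realType.
Implicit Types (a b c d : nat -> R) (C x y w : R).

Definition Yre0 a b c d : R := c 1%N + b 1%N.
Definition Yim0 a b c d : R := - a 1%N + d 1%N.
Definition Yre_coef a b c d j : R := - c j + b j.
Definition Yim_coef a b c d j : R := - a j - d j.
Definition Ycoef_norm2 a b c d j : R :=
  Yre_coef a b c d j ^+ 2 + Yim_coef a b c d j ^+ 2.

Lemma YreE x y w a b c d : Yre x y w a b c d
  = Yre0 a b c d + (x * Yre_coef a b c d 1 + y * Yre_coef a b c d 2
                    + w * Yre_coef a b c d 3).
Proof. by rewrite /Yre /Yre0 /Yre_coef !addrA. Qed.

Lemma YimE x y w a b c d : Yim x y w a b c d
  = Yim0 a b c d + (x * Yim_coef a b c d 1 + y * Yim_coef a b c d 2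
                    + w * Yim_coef a b c d 3).
Proof. by rewrite /Yim /Yim0 /Yim_coef !addrA. Qed.

Variables a b c d : nat -> R.
Hypothesis rel : relations a b c d.

Lemma relations_const j : (1 <= j <= 3)%N ->
  c j + b j = Yre0 a b c d /\ - a j + d j = Yim0 a b c d.
Proof.
case: rel => r12 r23 r12' r23' _.
by case: j => [|[|[|[|j]]]] //= _; rewrite /Yre0 /Yim0 ?r12 ?r12' ?r23 ?r23'.
Qed.

Lemma Pi_add_rotated C j : (1 <= j <= 3)%N ->
  2 * (Pi C a b c d j + Pi C a b c d (j + 3))
    = (1 + C) * (Yre0 a b c d ^+ 2 + Yim0 a b c d ^+ 2)
      - (1 - C) * Ycoef_norm2 a b c d j.
Proof.
move=> j13; have [<- <-] := relations_const j13.
have [_ _ _ _ rot] := rel; rewrite /Pi; have [-> -> -> ->] := rot j j13.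
by rewrite /Ycoef_norm2 /Yre_coef /Yim_coef; ring.
Qed.

Lemma PxywE C w1 w2 w3 :
  2 * Pxyw C w1 w2 w3 a b c d
    = (1 + C) * (w1 + w2 + w3) * (Yre0 a b c d ^+ 2 + Yim0 a b c d ^+ 2)
      - (1 - C) * (w1 * Ycoef_norm2 a b c d 1 + w2 * Ycoef_norm2 a b c d 2
                   + w3 * Ycoef_norm2 a b c d 3).
Proof.
have -> : 2 * Pxyw C w1 w2 w3 a b c d
  = w1 * (2 * (Pi C a b c d 1 + Pi C a b c d (1 + 3)))
    + w2 * (2 * (Pi C a b c d 2 + Pi C a b c d (2 + 3)))
    + w3 * (2 * (Pi C a b c d 3 + Pi C a b c d (3 + 3))) by rewrite /Pxyw; ring.
by rewrite !Pi_add_rotated //; ring.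
Qed.

Lemma nonzero_vars_low : nonzero_vars a b c d ->
  exists2 j, (1 <= j <= 3)%N & (a j != 0 \/ b j != 0 \/ c j != 0 \/ d j != 0).
Proof.
have [_ _ _ _ rot] := rel; case=> i [/andP[i1 i6] nz_i].
have [i3 | i4] := leqP i 3.
  by exists i; rewrite ?i1.
have j13 : (1 <= i - 3 <= 3)%N by rewrite subn_gt0 i4 leq_subLR.
move: nz_i; have -> : i = ((i - 3) + 3)%N by rewrite subnK // ltnW.
have [-> -> -> ->] := rot _ j13; rewrite !oppr_eq0.
by exists (i - 3)%N => //; tauto.
Qed.
Lemma kernel_vars_eq0 x y w :
  Yre x y w a b c d = 0 -> Yim x y w a b c d = 0 ->
  (forall j, (1 <= j <= 3)%N -> Ycoef_norm2 a b c d j = 0) ->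
  ~ nonzero_vars a b c d.
Proof.
move=> Yre_eq0 Yim_eq0 norm2_eq0.
have coef0 j : (1 <= j <= 3)%N ->
    Yre_coef a b c d j = 0 /\ Yim_coef a b c d j = 0.
  move=> j13; move/eqP: (norm2_eq0 j j13).
  by rewrite paddr_eq0 ?sqr_ge0 // !sqrf_eq0 => /andP[/eqP ? /eqP ?].
have [p1 q1] := coef0 1%N erefl; have [p2 q2] := coef0 2%N erefl.
have [p3 q3] := coef0 3%N erefl.
move: Yre_eq0 Yim_eq0; rewrite YreE YimE p1 p2 p3 q1 q2 q3 !mulr0 !addr0.
move=> s0 t0 /nonzero_vars_low[j j13].
have [] := relations_const j13; have [] := coef0 j j13.
rewrite /Yre_coef /Yim_coef s0 t0 => p0 q0 s0' t0'.
have [-> -> -> ->] : [/\ a j = 0, b j = 0, c j = 0 & d j = 0] by split; lra.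
by rewrite eqxx; case=> [|[|[]]].
Qed.

Lemma wsum_Ycoef_norm2_gt0 x y w w1 w2 w3 : 0 < w1 -> 0 < w2 -> 0 < w3 ->
  Yre x y w a b c d = 0 -> Yim x y w a b c d = 0 -> nonzero_vars a b c d ->
  0 < w1 * Ycoef_norm2 a b c d 1 + w2 * Ycoef_norm2 a b c d 2
      + w3 * Ycoef_norm2 a b c d 3.
Proof.
move=> w1_gt0 w2_gt0 w3_gt0 Yre_eq0 Yim_eq0 nz.
have norm2_ge0 j : 0 <= Ycoef_norm2 a b c d j by rewrite addr_ge0 ?sqr_ge0.
have Q_ge0 : 0 <= w1 * Ycoef_norm2 a b c d 1 + w2 * Ycoef_norm2 a b c d 2
                  + w3 * Ycoef_norm2 a b c d 3.
  by rewrite !addr_ge0 // mulr_ge0 ?norm2_ge0 ?ltW.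
rewrite lt_def Q_ge0 andbT; apply/eqP => Q0.
have [n1 n2 n3] := wsum3_eq0 w1_gt0 w2_gt0 w3_gt0 (norm2_ge0 1%N)
                     (norm2_ge0 2%N) (norm2_ge0 3%N) Q0.
by apply: (kernel_vars_eq0 Yre_eq0 Yim_eq0) nz => -[|[|[|[|j]]]].
Qed.

End Coordinates.

Lemma negdef_on_K_le_weights (R : realType) (C w1 w2 w3 e1 e2 e3 : R) :
  0 < w1 -> 0 < w2 -> 0 < w3 ->
  0 <= e1 <= w1 -> 0 <= e2 <= w2 -> 0 <= e3 <= w3 ->
  0 < C -> C < 1 - (w1 + w2 + w3) ->
  negdef_on_K C w1 w2 w3 e1 e2 e3.
Proof.
move=> w1_gt0 w2_gt0 w3_gt0 e1w e2w e3w C_gt0 C_lt a b c d.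
move=> [rel [Yre_eq0 Yim_eq0]] nz.
pose W := w1 + w2 + w3.
pose Qre := w1 * Yre_coef a b c d 1 ^+ 2 + w2 * Yre_coef a b c d 2 ^+ 2
            + w3 * Yre_coef a b c d 3 ^+ 2.
pose Qim := w1 * Yim_coef a b c d 1 ^+ 2 + w2 * Yim_coef a b c d 2 ^+ 2
            + w3 * Yim_coef a b c d 3 ^+ 2.
have W_gt0 : 0 < W by rewrite !addr_gt0.
have Yre0_le : Yre0 a b c d ^+ 2 <= W * Qre.
  move/eqP: Yre_eq0; rewrite YreE addr_eq0 => /eqP ->.
  by rewrite sqrrN sqr_wsum3_le.
have Yim0_le : Yim0 a b c d ^+ 2 <= W * Qim.
  move/eqP: Yim_eq0; rewrite YimE addr_eq0 => /eqP ->.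
  by rewrite sqrrN sqr_wsum3_le.
have QE : w1 * Ycoef_norm2 a b c d 1 + w2 * Ycoef_norm2 a b c d 2
          + w3 * Ycoef_norm2 a b c d 3 = Qre + Qim.
  by rewrite /Ycoef_norm2 /Qre /Qim; ring.
have Q_gt0 : 0 < Qre + Qim.
  by rewrite -QE (wsum_Ycoef_norm2_gt0 rel w1_gt0 w2_gt0 w3_gt0 Yre_eq0 Yim_eq0).
have CW_ge0 : 0 <= (1 + C) * W by rewrite mulr_ge0 //; lra.
have : 2 * Pxyw C w1 w2 w3 a b c d < 0.
  rewrite PxywE // QE -/W.
  have := ler_wpM2l CW_ge0 (lerD Yre0_le Yim0_le).
  have := one_add_mul_sqr_lt_one_sub C_gt0 W_gt0 C_lt.
  rewrite -(ltr_pM2r Q_gt0).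
  lra.
by rewrite pmulr_rlt0.
Qed.

Theorem proposition8p9 (R : realType) (alpha beta gamma : R) :
  0 <= alpha -> 0 <= beta -> 0 <= gamma -> alpha + beta + gamma < 1 ->
  [/\
   (* (1) *)
   (0 < alpha -> 0 < beta -> 0 < gamma ->
    forall C : R, 0 < C -> C < 1 - (alpha + beta + gamma) ->
    forall lam : R, 0 <= lam -> lam <= 1 ->
      negdef_on_K C alpha beta gamma (lam * alpha) (lam * beta) (lam * gamma)),
   (* (2) *)
   (0 < alpha -> 0 < beta -> gamma = 0 ->
    forall C gamma' : R, 0 < C -> 0 < gamma' ->
    C < 1 - (alpha + beta + gamma') ->
    forall lam : R, 0 <= lam -> lam <= 1 ->
      negdef_on_K C alpha beta gamma' (lam * alpha) (lam * beta) (lam * gamma))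
  &
   (* (3) *)
   (0 < alpha -> beta = 0 -> gamma = 0 ->
    forall C beta' gamma' : R, 0 < C -> 0 < beta' -> 0 < gamma' ->
    C < 1 - (alpha + beta' + gamma') ->
    forall lam : R, 0 <= lam -> lam <= 1 ->
      negdef_on_K C alpha beta' gamma' (lam * alpha) (lam * beta) (lam * gamma))].
Proof.
move=> alpha_ge0 beta_ge0 gamma_ge0 _.
have scaled lam x : 0 <= lam -> lam <= 1 -> 0 <= x -> 0 <= lam * x <= x.
  by move=> lam_ge0 lam_le1 x_ge0; rewrite mulr_ge0 ?ler_piMl.
split.
- move=> alpha_gt0 beta_gt0 gamma_gt0 C C_gt0 C_lt lam lam_ge0 lam_le1.
  by apply: negdef_on_K_le_weights; rewrite ?scaled.
- move=> alpha_gt0 beta_gt0 -> C gamma' C_gt0 gamma'_gt0 C_lt lam lam_ge0 lam_le1.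
  by apply: negdef_on_K_le_weights; rewrite ?scaled // mulr0 lexx ltW.
- move=> alpha_gt0 -> -> C beta' gamma' C_gt0 beta'_gt0 gamma'_gt0 C_lt lam lam_ge0 lam_le1.
  by apply: negdef_on_K_le_weights; rewrite ?scaled // mulr0 lexx ltW.
Qed.
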